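(* Let $k$ be a field, let $A$ be a finite-dimensional (associative, unital) $k$-algebra, and let $(\Omega A,d)$ be a differential graded algebra with $\Omega^0A=A$ such that $\Omega^1A$ is finite-dimensional over $k$. Put $C=\mathrm{Hom}_k(A,k)$ (the dual coalgebra), $L=\mathrm{Hom}_k(\Omega^1A,k)$ and $\lambda=\mathrm{Hom}_k(d,k):L\to C$, $l\mapsto l\circ d$. Let $M$ be a right $A$-module, regarded as a left $C$-comodule via ${}^M\!\varrho(m)=\sum_s c^s\otimes m a^s$. Let $\Upsilon: L\Box_C M\to \mathrm{Hom}_A(\Omega^1A,M)$, $\Upsilon(\sum_i l_i\otimes m_i)(\omega)=\sum_i l_i(\omega)m_i$ (this is a linear isomorphism). Then the assignment $\nabla_0\mapsto -\nabla_0\circ\Upsilon$ is a bijection from the set of hom-connections $\nabla_0:\mathrm{Hom}_A(\Omega^1A,M)\to M$ onto the set of connections $\bar\nabla: L\Box_C M\to M$ in the left $C$-comodule $M$ with respect to $\lambda$.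
   Context: All algebras are associative and unital over the field $k$; $\otimes$ is over $k$. A differential graded algebra $\Omega A=\bigoplus_{n\ge0}\Omega^nA$ over $A=\Omega^0A$ has a degree-one differential $d$ with $d^2=0$ satisfying the graded Leibniz rule. For a right $A$-module $M$, $\mathrm{Hom}_A(\Omega^1A,M)$ denotes right $A$-linear maps, and it is a right $A$-module via $(fa)(\omega)=f(a\omega)$. A (right) hom-connection on $M$ is a $k$-linear map $\nabla_0:\mathrm{Hom}_A(\Omega^1A,M)\to M$ with $\nabla_0(fa)=\nabla_0(f)a+f(da)$ for all $f$ and $a\in A$. Fix a basis $\{a^s\}$ of $A$ and the dual basis $\{c^s\}$ of $C$. $L$ is an $A$-bimodule by $(alb)(\omega)=l(b\omega a)$, and a $C$-bicomodule with left coaction $l\mapsto\sum_s c^s\otimes la^s$ and right coaction $l\mapsto \sum_s a^sl\otimes c^s$. The cotensor product is $L\Box_C M=\{\sum_i l_i\otimes m_i\in L\otimes M : \sum_{i,s}a^sl_i\otimes c^s\otimes m_i=\sum_{i,s}l_i\otimes c^s\otimes m_ia^s\}$. A connection in the left $C$-comodule $M$ with respect to $\lambda$ is a $k$-linear map $\bar\nabla:L\Box_CM\to M$ such that for all $\sum_i l_i\otimes m_i\in L\Box_C M$: ${}^M\!\varrho\big(\bar\nabla(\sum_i l_i\otimes m_i)\big)=\sum_s c^s\otimes\bar\nabla(\sum_i l_ia^s\otimes m_i)+\sum_i\lambda(l_i)\otimes m_i$ in $C\otimes M$. *)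

From Stdlib Require List.
From mathcomp Require Import all_boot all_order all_algebra.
Set Implicit Arguments.
Unset Strict Implicit.
Unset Printing Implicit Defensive.
Import GRing.Theory.
Local Open Scope ring_scope.

Record fbasis (k : fieldType) (V : lmodType k) (n : nat) := FBasis {
  bvec   : 'I_n -> V;
  bcoord : 'I_n -> V -> k;
  bcoord_lin : forall i (c : k) (u v : V),
      bcoord i (c *: u + v) = c * bcoord i u + bcoord i v;
  bcoord_vec : forall i j, bcoord i (bvec j) = (i == j)%:R;
  bexpand : forall v : V, v = \sum_(i < n) bcoord i v *: bvec i
}.

Definition omcast (F : nat -> Type) (n m : nat) (e : n = m) (x : F n) : F m :=
  eq_rect n F x m e.

Record dga (k : fieldType) (A : algType k) := DGA {
  Om   : nat -> lmodType k;
  omul : forall n m, Om n -> Om m -> Om (n + m);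
  one  : Om 0;
  dd   : forall n, Om n -> Om n.+1;
  omulDl : forall n m (x x' : Om n) (y : Om m),
      omul (x + x') y = omul x y + omul x' y;
  omulDr : forall n m (x : Om n) (y y' : Om m),
      omul x (y + y') = omul x y + omul x y';
  omulZl : forall n m (c : k) (x : Om n) (y : Om m),
      omul (c *: x) y = c *: omul x y;
  omulZr : forall n m (c : k) (x : Om n) (y : Om m),
      omul x (c *: y) = c *: omul x y;
  omulA : forall n m p (x : Om n) (y : Om m) (z : Om p),
      omcast (F := fun i => Om i) (addnA n m p) (omul x (omul y z)) = omul (omul x y) z;
  omul1l : forall n (x : Om n), omul one x = x;
  omul1r : forall n (x : Om n), omcast (F := fun i => Om i) (addn0 n) (omul x one) = x;
  ddD : forall n (x y : Om n), dd (x + y) = dd x + dd y;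
  ddZ : forall n (c : k) (x : Om n), dd (c *: x) = c *: dd x;
  dd2 : forall n (x : Om n), dd (dd x) = 0;
  ddM : forall n m (x : Om n) (y : Om m),
      dd (omul x y) = omul (dd x) y
                      + (-1) ^+ n *: omcast (F := fun i => Om i) (addnS n m) (omul x (dd y));
  iota : A -> Om 0;
  iota_lin : forall (c : k) (a b : A), iota (c *: a + b) = c *: iota a + iota b;
  iotaM : forall a b : A, iota (a * b) = omul (iota a) (iota b);
  iota1 : iota 1 = one;
  iota_bij : bijective iota
}.

Section Calculus.
Variables (k : fieldType) (A : algType k) (D : dga A).

Definition Om1 : lmodType k := Om D 1.
Definition lact (a : A) (w : Om1) : Om1 := @omul _ _ D 0 1 (iota D a) w.
Definition ract1 (w : Om1) (a : A) : Om1 := @omul _ _ D 1 0 w (iota D a).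
Definition dA (a : A) : Om1 := @dd _ _ D 0 (iota D a).
End Calculus.

Record rmodule (k : fieldType) (A : algType k) (M : lmodType k) := RModule {
  ract : M -> A -> M;
  ract1m : forall m, ract m 1 = m;
  ractM : forall m (a b : A), ract (ract m a) b = ract m (a * b);
  ractDl : forall (m m' : M) a, ract (m + m') a = ract m a + ract m' a;
  ractDr : forall m (a b : A), ract m (a + b) = ract m a + ract m b;
  ractZl : forall (c : k) m a, ract (c *: m) a = c *: ract m a;
  ractZr : forall (c : k) m a, ract m (c *: a) = c *: ract m a
}.

Section Connections.
Variables (k : fieldType) (A : algType k) (n : nat) (BA : fbasis A n).
Variables (D : dga A) (p : nat) (BO : fbasis (Om1 D) p).
Variables (M : lmodType k) (RM : rmodule A M).

Local Notation Om1 := (Om1 D).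
Local Notation "m <. a" := (ract RM m a) (at level 40).
(* a^s and c^s : basis of A and dual basis of C = Hom_k(A,k) *)
Local Notation a_ := (bvec BA).
Local Notation c_ := (bcoord BA).

Definition klinL (l : Om1 -> k) :=
  forall (c : k) (u v : Om1), l (c *: u + v) = c * l u + l v.
Definition Lact (a : A) (l : Om1 -> k) : Om1 -> k := fun w => l (ract1 w a).
Definition Lract (l : Om1 -> k) (a : A) : Om1 -> k := fun w => l (lact a w).
Definition lam (l : Om1 -> k) : A -> k := fun x => l (dA D x).

(* ---- tensor products, in coordinates w.r.t. the dual bases ----
   L (x) M     ~ M^p : sum_j e^j (x) t_j    (e^j dual basis of L)
   C (x) M     ~ M^n : sum_s c^s (x) t_s
   L (x) C (x) M ~ M^(p*n)                                              *)
Definition tLM := {ffun 'I_p -> M}.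
Definition tCM := {ffun 'I_n -> M}.
Definition tLCM := {ffun 'I_p * 'I_n -> M}.

Definition pLM (l : Om1 -> k) (m : M) : tLM := [ffun j => l (bvec BO j) *: m].
Definition pCM (f : A -> k) (m : M) : tCM := [ffun s => f (a_ s) *: m].
Definition pLCM (l : Om1 -> k) (f : A -> k) (m : M) : tLCM :=
  [ffun js => (l (bvec BO js.1) * f (a_ js.2)) *: m].

(* the element sum_i l_i (x) m_i of L (x) M, for a family r = [(l_i, m_i)] *)
Definition tsum (r : seq ((Om1 -> k) * M)) : tLM :=
  \sum_(x <- r) pLM x.1 x.2.
Definition all_lin (r : seq ((Om1 -> k) * M)) :=
  forall l m, List.In (l, m) r -> klinL l.

Definition coact (m : M) : tCM := \sum_(s < n) pCM (c_ s) (m <. a_ s).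

Definition cot_eq (r : seq ((Om1 -> k) * M)) :=
  \sum_(x <- r) \sum_(s < n) pLCM (Lact (a_ s) x.1) (c_ s) x.2
  = \sum_(x <- r) \sum_(s < n) pLCM x.1 (c_ s) (x.2 <. a_ s).

Definition cotensor (t : tLM) :=
  exists r, [/\ all_lin r, t = tsum r & cot_eq r].

Definition Upsilon (t : tLM) : Om1 -> M :=
  fun w => \sum_(j < p) bcoord BO j w *: t j.

Definition HomA (f : Om1 -> M) :=
  (forall (c : k) (u v : Om1), f (c *: u + v) = c *: f u + f v)
  /\ (forall (w : Om1) (a : A), f (ract1 w a) = f w <. a).
Definition Hract (f : Om1 -> M) (a : A) : Om1 -> M := fun w => f (lact a w).

(* ---- hom-connections on M (only values on Hom_A(Omega^1,M) matter) ---- *)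
Definition homconn (N0 : (Om1 -> M) -> M) :=
  (forall (c : k) f g, HomA f -> HomA g ->
      N0 (fun w => c *: f w + g w) = c *: N0 f + N0 g)
  /\ (forall f (a : A), HomA f -> N0 (Hract f a) = N0 f <. a + f (dA D a)).

(* ---- connections in the left C-comodule M w.r.t. lambda
        (only values on L []_C M matter) ---- *)
Definition conn (Nb : tLM -> M) :=
  (forall (c : k) t t', cotensor t -> cotensor t' ->
      Nb (c *: t + t') = c *: Nb t + Nb t')
  /\ (forall r, all_lin r -> cotensor (tsum r) ->
      coact (Nb (tsum r))
      = \sum_(s < n) pCM (c_ s) (Nb (tsum [seq (Lract x.1 (a_ s), x.2) | x <- r]))
        + \sum_(x <- r) pCM (lam x.1) x.2).

Definition PhiConn (N0 : (Om1 -> M) -> M) : tLM -> M :=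
  fun t => - N0 (Upsilon t).

End Connections.

From Pilot Require Import Defs.
From mathcomp Require Import all_boot all_order all_algebra.
From Stdlib Require Import FunctionalExtensionality.
Set Implicit Arguments.
Unset Strict Implicit.
Unset Printing Implicit Defensive.
Import GRing.Theory.
Local Open Scope ring_scope.

(* Upsilon is inverted by evaluating a
   map on the basis of Omega^1, and sum_i l_i (x) m_i lies in L []_C M exactly
   when Upsilon of it is right A-linear: the two sides of the cotensor equation,
   evaluated at e_j (x) a^s, are f(e_j a^s) and f(e_j) a^s.  Likewise, the
   C-component c^s of the connection identity for - nabla_0 o Upsilon is the
   Leibniz rule of nabla_0 at a = a^s, and both sides of the Leibniz rule are
   linear in a. *)

Section LinearMaps.
Variables (K : fieldType) (U V : lmodType K).

Definition lin_map (f : U -> V) :=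
  forall (c : K) u v, f (c *: u + v) = c *: f u + f v.

Variables (f : U -> V) (f_lin : lin_map f).

Lemma lin_map0 : f 0 = 0.
Proof.
have := f_lin 1 0 0; rewrite scaler0 addr0 scale1r => f00.
by rewrite -(addrK (f 0) (f 0)) -f00 subrr.
Qed.

Lemma lin_mapD : {morph f : x y / x + y}.
Proof. by move=> x y; have := f_lin 1 x y; rewrite !scale1r. Qed.

Lemma lin_mapZ c u : f (c *: u) = c *: f u.
Proof. by rewrite -[c *: u]addr0 f_lin lin_map0 addr0. Qed.

Lemma lin_map_sum (I : Type) (r : seq I) (P : pred I) (F : I -> U) :
  f (\sum_(i <- r | P i) F i) = \sum_(i <- r | P i) f (F i).
Proof. exact: (big_morph f lin_mapD lin_map0). Qed.

End LinearMaps.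

Section Bases.
Variables (K : fieldType) (V W : lmodType K) (n : nat) (B : fbasis V n).

Lemma bcoord_delta_sum (F : 'I_n -> W) j :
  \sum_(i < n) bcoord B i (bvec B j) *: F i = F j.
Proof.
rewrite (bigD1 j) //= bcoord_vec eqxx scale1r big1 ?addr0 // => i /negbTE ne.
by rewrite bcoord_vec ne scale0r.
Qed.

Lemma lin_map_expand (f : V -> W) v : lin_map f ->
  f v = \sum_(i < n) bcoord B i v *: f (bvec B i).
Proof.
move=> f_lin; rewrite {1}(bexpand B v) (lin_map_sum f_lin).
by apply: eq_bigr => i _; rewrite (lin_mapZ f_lin).
Qed.

End Bases.

Section HomConnectionsAndConnections.
Variables (k : fieldType) (A : algType k) (n : nat) (BA : fbasis A n).
Variables (D : dga A) (p : nat) (BO : fbasis (Om1 D) p).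
Variables (M : lmodType k) (RM : rmodule A M).

Local Notation "m <. a" := (ract RM m a) (at level 40).
Local Notation a_ := (bvec BA).
Local Notation c_ := (bcoord BA).
Local Notation e_ := (bvec BO).
Local Notation Om1 := (Om1 D).
Local Notation tLM := (tLM p M).
Local Notation family := (seq ((Om1 -> k) * M)).
Local Notation Upsilon := (@Upsilon _ _ _ _ BO M).
Local Notation tsum := (tsum BO).
Local Notation cotensor := (cotensor BA BO RM).
Local Notation HomA := (HomA RM).

Lemma klinL_lin_map (l : Om1 -> k) : klinL l -> lin_map (V := k^o) l.
Proof. by []. Qed.

Lemma ract_linl a : lin_map (fun m : M => m <. a).
Proof. by move=> c u v; rewrite ractDl ractZl. Qed.

Lemma ract_linr (m : M) : lin_map (fun a : A => m <. a).
Proof. by move=> c u v; rewrite ractDr ractZr. Qed.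

Lemma ractN (m : M) a : (- m) <. a = - (m <. a).
Proof. by rewrite -scaleN1r (lin_mapZ (ract_linl a)) scaleN1r. Qed.

Lemma ract1_linl (a : A) : lin_map (fun w : Om1 => ract1 w a).
Proof. by move=> c u v; rewrite /ract1 omulDl omulZl. Qed.

Lemma ract1_linr (w : Om1) : lin_map (fun a : A => ract1 w a).
Proof. by move=> c u v; rewrite /ract1 iota_lin omulDr omulZr. Qed.

Lemma lact_linl (w : Om1) : lin_map (fun a : A => lact a w).
Proof. by move=> c u v; rewrite /lact iota_lin omulDl omulZl. Qed.

Lemma lact_linr (a : A) : lin_map (fun w : Om1 => lact a w).
Proof. by move=> c u v; rewrite /lact omulDr omulZr. Qed.

Lemma dA_lin : lin_map (dA D).
Proof. by move=> c u v; rewrite /dA iota_lin ddD ddZ. Qed.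

Lemma lact_ract1 a (w : Om1) b : lact a (ract1 w b) = ract1 (lact a w) b.
Proof.
rewrite /lact /ract1 -(@omulA _ _ D 0 1 0 (Defs.iota D a) w (Defs.iota D b)) /omcast.
by rewrite (eq_irrelevance (addnA 0 1 0) (erefl 1%N)).
Qed.

Lemma ract_expand (m : M) a : m <. a = \sum_(s < n) c_ s a *: (m <. a_ s).
Proof. exact: lin_map_expand (ract_linr m). Qed.

Lemma HomA_comb c (f g : Om1 -> M) : HomA f -> HomA g ->
  HomA (fun w => c *: f w + g w).
Proof.
move=> [f_lin fA] [g_lin gA]; split=> [d u v | w a].
  by rewrite f_lin g_lin !scalerDr !scalerA [d * c]mulrC addrACA.
by rewrite fA gA ractDl ractZl.
Qed.

Lemma HomA_Hract (f : Om1 -> M) a : HomA f -> HomA (Hract f a).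
Proof.
move=> [f_lin fA]; split=> [c u v | w b]; rewrite /Hract.
  by rewrite (lact_linr a) f_lin.
by rewrite lact_ract1 fA.
Qed.

Lemma HomA_on_basis (f : Om1 -> M) : lin_map f ->
  (forall j s, f (ract1 (e_ j) (a_ s)) = f (e_ j) <. a_ s) -> HomA f.
Proof.
move=> f_lin fA; split=> [|w a]; first exact: f_lin.
rewrite (bexpand BO w) (lin_map_sum (ract1_linl a)) !(lin_map_sum f_lin).
rewrite (lin_map_sum (ract_linl a)); apply: eq_bigr => j _ /=.
rewrite (lin_mapZ (ract1_linl a)) !(lin_mapZ f_lin) (lin_mapZ (ract_linl a)).
congr (_ *: _); rewrite (lin_map_expand BA a (ract1_linr _)).
rewrite (lin_map_sum f_lin) (lin_map_expand BA a (ract_linr _)).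
by apply: eq_bigr => s _; rewrite (lin_mapZ f_lin) fA.
Qed.

Definition Upsilon_inv (f : Om1 -> M) : tLM := [ffun j => f (e_ j)].

Lemma Upsilon_linr (t : tLM) : lin_map (Upsilon t).
Proof.
move=> c u v; rewrite /Upsilon scaler_sumr -big_split /=; apply: eq_bigr => j _.
by rewrite bcoord_lin scalerDl scalerA.
Qed.

Lemma Upsilon_linl w : lin_map (fun t : tLM => Upsilon t w).
Proof.
move=> c t t'; rewrite /Upsilon scaler_sumr -big_split /=; apply: eq_bigr => j _.
by rewrite !ffunE scalerDr !scalerA mulrC.
Qed.

Lemma UpsilonDZ c (t t' : tLM) :
  Upsilon (c *: t + t') = (fun w => c *: Upsilon t w + Upsilon t' w).
Proof. by apply: functional_extensionality => w; rewrite (Upsilon_linl w). Qed.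

Lemma UpsilonK : cancel Upsilon Upsilon_inv.
Proof. by move=> t; apply/ffunP => j; rewrite ffunE /Upsilon bcoord_delta_sum. Qed.

Lemma Upsilon_invK f : lin_map f -> Upsilon (Upsilon_inv f) = f.
Proof.
move=> f_lin; apply: functional_extensionality => w.
by rewrite (lin_map_expand BO w f_lin); apply: eq_bigr => j _; rewrite ffunE.
Qed.

Lemma Upsilon_inv_comb c (f g : Om1 -> M) :
  Upsilon_inv (fun w => c *: f w + g w) = c *: Upsilon_inv f + Upsilon_inv g.
Proof. by apply/ffunP => j; rewrite !ffunE. Qed.

Lemma Upsilon_pLM (l : Om1 -> k) (m : M) w : klinL l ->
  Upsilon (pLM BO l m) w = l w *: m.
Proof.
move=> /klinL_lin_map l_lin; rewrite (lin_map_expand BO w l_lin) scaler_suml.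
by apply: eq_bigr => j _; rewrite ffunE scalerA.
Qed.

Lemma all_lin_cons l m (r : family) :
  all_lin ((l, m) :: r) <-> klinL l /\ all_lin r.
Proof.
split=> [lin_lr | [l_lin r_lin] l' m' [[<- _] | /r_lin //]] //.
by split=> [|l' m' in_r]; [apply: (lin_lr l m); left | apply: (lin_lr l' m'); right].
Qed.

Lemma Upsilon_tsum (r : family) w : all_lin r ->
  Upsilon (tsum r) w = \sum_(x <- r) x.1 w *: x.2.
Proof.
elim: r => [_|[l m] r IHr /all_lin_cons [l_lin r_lin]].
  by rewrite /tsum !big_nil /Upsilon big1 // => j _; rewrite ffunE scaler0.
by rewrite /tsum !big_cons (lin_mapD (Upsilon_linl w)) Upsilon_pLM // IHr.
Qed.

Lemma cot_eq_lhsE (r : family) j s' :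
  (\sum_(x <- r) \sum_(s < n) pLCM BA BO (Lact (a_ s) x.1) (c_ s) x.2) (j, s')
  = \sum_(x <- r) x.1 (ract1 (e_ j) (a_ s')) *: x.2.
Proof.
rewrite sum_ffunE; apply: eq_bigr => x _; rewrite sum_ffunE.
under eq_bigr do rewrite ffunE /= mulrC -scalerA.
by rewrite bcoord_delta_sum.
Qed.

Lemma cot_eq_rhsE (r : family) j s' :
  (\sum_(x <- r) \sum_(s < n) pLCM BA BO x.1 (c_ s) (x.2 <. a_ s)) (j, s')
  = (\sum_(x <- r) x.1 (e_ j) *: x.2) <. a_ s'.
Proof.
rewrite sum_ffunE (lin_map_sum (ract_linl _)); apply: eq_bigr => x _.
rewrite sum_ffunE; under eq_bigr do rewrite ffunE /= mulrC -scalerA.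
by rewrite bcoord_delta_sum ractZl.
Qed.

Lemma cot_eqP (r : family) : all_lin r ->
  cot_eq BA BO RM r <-> HomA (Upsilon (tsum r)).
Proof.
move=> r_lin; split=> [cot_r | [_ UA]].
  apply: HomA_on_basis => [|j s]; first exact: Upsilon_linr.
  move/ffunP: cot_r => /(_ (j, s)); rewrite cot_eq_lhsE cot_eq_rhsE.
  by rewrite !Upsilon_tsum.
apply/ffunP => -[j s]; rewrite cot_eq_lhsE cot_eq_rhsE.
by rewrite -!Upsilon_tsum // UA.
Qed.

Definition coord_family (t : tLM) : family :=
  [seq (bcoord BO j, t j) | j <- index_enum 'I_p].

Lemma all_lin_coord_family t : all_lin (coord_family t).
Proof.
rewrite /coord_family; elim: (index_enum _) => [|j js IHjs] //=.
by apply/all_lin_cons; split; [exact: bcoord_lin | exact: IHjs].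
Qed.

Lemma Upsilon_coord_family t : Upsilon (tsum (coord_family t)) = Upsilon t.
Proof.
apply: functional_extensionality => w.
rewrite Upsilon_tsum; last exact: all_lin_coord_family.
rewrite /coord_family /Upsilon.
by elim: (index_enum _) => [|j js IHjs]; rewrite ?big_nil // !big_cons IHjs.
Qed.

Lemma tsum_coord_family t : tsum (coord_family t) = t.
Proof. by rewrite -[LHS]UpsilonK Upsilon_coord_family UpsilonK. Qed.

Lemma cotensorP t : cotensor t <-> HomA (Upsilon t).
Proof.
split=> [[r [r_lin -> /cot_eqP]]|UA]; first exact.
exists (coord_family t); split; first exact: all_lin_coord_family.
  by rewrite tsum_coord_family.
by apply/cot_eqP; rewrite ?Upsilon_coord_family //; apply: all_lin_coord_family.
Qed.

Lemma cotensor0 : cotensor 0.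
Proof. by exists [::]; split; rewrite // /tsum /cot_eq !big_nil. Qed.

Lemma cotensor_comb c t t' : cotensor t -> cotensor t' -> cotensor (c *: t + t').
Proof.
by move=> /cotensorP Ut /cotensorP Ut'; apply/cotensorP; rewrite UpsilonDZ; apply: HomA_comb.
Qed.

Lemma cotensor_Upsilon_inv f : HomA f -> cotensor (Upsilon_inv f).
Proof. by move=> fA; apply/cotensorP; rewrite Upsilon_invK //; case: fA. Qed.

Lemma coactE (m : M) s : coact BA RM m s = m <. a_ s.
Proof.
by rewrite /coact sum_ffunE; under eq_bigr do rewrite ffunE; rewrite bcoord_delta_sum.
Qed.

Lemma sum_pCM_coord (X : 'I_n -> M) s : (\sum_(s' < n) pCM BA (c_ s') (X s')) s = X s.
Proof. by rewrite sum_ffunE; under eq_bigr do rewrite ffunE; rewrite bcoord_delta_sum. Qed.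

Lemma sum_pCM_lam_coord (r : family) s : all_lin r ->
  (\sum_(x <- r) pCM BA (lam x.1) x.2) s = Upsilon (tsum r) (dA D (a_ s)).
Proof. by move=> r_lin; rewrite sum_ffunE Upsilon_tsum //; apply: eq_bigr => x _; rewrite ffunE. Qed.

Lemma all_lin_Lract (r : family) a : all_lin r ->
  all_lin [seq (Lract x.1 a, x.2) | x <- r].
Proof.
elim: r => [|[l m] r IHr] //= /all_lin_cons [l_lin r_lin].
apply/all_lin_cons; split; last exact: IHr.
by move=> c u v; rewrite /Lract (lact_linr a) l_lin.
Qed.

Lemma Upsilon_tsum_Lract (r : family) a : all_lin r ->
  Upsilon (tsum [seq (Lract x.1 a, x.2) | x <- r]) = Hract (Upsilon (tsum r)) a.
Proof.
move=> r_lin; apply: functional_extensionality => w.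
rewrite /Hract !Upsilon_tsum //; last exact: all_lin_Lract.
by elim: r {r_lin} => [|x r IHr]; rewrite ?big_nil // !big_cons IHr.
Qed.

Lemma tsum_Lract (r : family) a : all_lin r ->
  tsum [seq (Lract x.1 a, x.2) | x <- r] = Upsilon_inv (Hract (Upsilon (tsum r)) a).
Proof. by move=> r_lin; rewrite -[LHS]UpsilonK Upsilon_tsum_Lract. Qed.

Lemma conn_identityP (Nb : tLM -> M) (r : family) : all_lin r ->
  coact BA RM (Nb (tsum r))
  = \sum_(s < n) pCM BA (c_ s) (Nb (tsum [seq (Lract x.1 (a_ s), x.2) | x <- r]))
    + \sum_(x <- r) pCM BA (lam x.1) x.2
  <-> forall s, Nb (tsum r) <. a_ s
        = Nb (Upsilon_inv (Hract (Upsilon (tsum r)) (a_ s)))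
          + Upsilon (tsum r) (dA D (a_ s)).
Proof.
move=> r_lin; split=> [/ffunP conn_r s | conn_r]; last apply/ffunP => s.
  by have := conn_r s; rewrite coactE ffunE sum_pCM_coord sum_pCM_lam_coord // tsum_Lract.
by rewrite coactE ffunE sum_pCM_coord sum_pCM_lam_coord // tsum_Lract // conn_r.
Qed.

Lemma conn_PhiConn N0 : homconn RM N0 -> conn BA BO RM (PhiConn BO N0).
Proof.
move=> [N0_lin N0_Leibniz]; split=> [c t t' /cotensorP Ut /cotensorP Ut' | r r_lin].
  by rewrite /PhiConn UpsilonDZ N0_lin // opprD scalerN.
move=> /cotensorP UA; apply/conn_identityP => // s.
have [UA_s_lin _] := HomA_Hract (a_ s) UA.
by rewrite /PhiConn Upsilon_invK // N0_Leibniz // ractN opprD addrNK.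
Qed.

Lemma PhiConn_inj N0 N0' :
  (forall t, cotensor t -> PhiConn BO N0 t = PhiConn BO N0' t) ->
  forall f, HomA f -> N0 f = N0' f.
Proof.
move=> eqN f fA; have := eqN _ (cotensor_Upsilon_inv fA).
by rewrite /PhiConn Upsilon_invK; [move/oppr_inj | case: fA].
Qed.

Section HomConnectionOfConnection.
Variables (Nb : tLM -> M) (Nb_conn : conn BA BO RM Nb).

Definition homconn_of_conn (f : Om1 -> M) : M := - Nb (Upsilon_inv f).

Lemma conn0 : Nb 0 = 0.
Proof.
have := Nb_conn.1 1 _ _ cotensor0 cotensor0.
rewrite scaler0 addr0 scale1r => Nb00.
by rewrite -(addrK (Nb 0) (Nb 0)) -Nb00 subrr.
Qed.

Lemma conn_sum (C : 'I_n -> k) (T : 'I_n -> tLM) : (forall s, cotensor (T s)) ->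
  Nb (\sum_(s < n) C s *: T s) = \sum_(s < n) C s *: Nb (T s).
Proof.
move=> T_cot; suff [] : cotensor (\sum_(s < n) C s *: T s) /\
  Nb (\sum_(s < n) C s *: T s) = \sum_(s < n) C s *: Nb (T s) by [].
apply: (big_rec2 (fun (y1 : M) (y2 : tLM) => cotensor y2 /\ Nb y2 = y1)).
  by split; [exact: cotensor0 | exact: conn0].
move=> s y1 y2 _ [y2_cot <-]; split; first exact: cotensor_comb.
exact: Nb_conn.1.
Qed.

Lemma conn_Leibniz_basis f s : HomA f ->
  Nb (Upsilon_inv (Hract f (a_ s))) = Nb (Upsilon_inv f) <. a_ s - f (dA D (a_ s)).
Proof.
move=> fA; have f_lin : lin_map f by case: fA.
set r := coord_family (Upsilon_inv f).
have r_lin : all_lin r by exact: all_lin_coord_family.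
have r_cot : cotensor (tsum r) by rewrite tsum_coord_family; exact: cotensor_Upsilon_inv.
have /(conn_identityP _ r_lin) /(_ s) := Nb_conn.2 _ r_lin r_cot.
by rewrite tsum_coord_family Upsilon_invK // => ->; rewrite addrK.
Qed.

Lemma Upsilon_inv_Hract_expand (f : Om1 -> M) a : lin_map f ->
  Upsilon_inv (Hract f a) = \sum_(s < n) c_ s a *: Upsilon_inv (Hract f (a_ s)).
Proof.
move=> f_lin; apply/ffunP => j; rewrite ffunE sum_ffunE /Hract.
rewrite (lin_map_expand BA a (f := fun a => f (lact a (e_ j)))).
  by apply: eq_bigr => s _; rewrite !ffunE.
by move=> c u v; rewrite (lact_linl (e_ j)) f_lin.
Qed.

Lemma homconn_homconn_of_conn : homconn RM homconn_of_conn.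
Proof.
split=> [c f g fA gA | f a fA]; rewrite /homconn_of_conn.
  rewrite Upsilon_inv_comb Nb_conn.1 ?opprD ?scalerN //; exact: cotensor_Upsilon_inv.
have f_lin : lin_map f by case: fA.
rewrite Upsilon_inv_Hract_expand // conn_sum; last first.
  by move=> s; apply/cotensor_Upsilon_inv/HomA_Hract.
under eq_bigr do rewrite conn_Leibniz_basis //.
rewrite ractN ract_expand (lin_map_expand BA a (f := fun a => f (dA D a))); last first.
  by move=> c u v; rewrite dA_lin f_lin.
rewrite -!sumrN -big_split /=; apply: eq_bigr => s _.
by rewrite scalerBr opprB addrC.
Qed.

Lemma PhiConn_homconn_of_conn t : PhiConn BO homconn_of_conn t = Nb t.
Proof. by rewrite /PhiConn /homconn_of_conn opprK UpsilonK. Qed.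

End HomConnectionOfConnection.

End HomConnectionsAndConnections.

Theorem mainTheorem1 (k : fieldType) (A : algType k)
  (n : nat) (BA : fbasis A n)
  (D : dga A)
  (p : nat) (BO : fbasis (Om1 D) p)
  (M : lmodType k) (RM : rmodule A M) :
  (forall N0 : (Om1 D -> M) -> M,
      homconn RM N0 -> conn BA BO RM (PhiConn BO N0))
  /\ (forall Nb : tLM p M -> M, conn BA BO RM Nb ->
        exists N0 : (Om1 D -> M) -> M, homconn RM N0 /\
          (forall t, cotensor BA BO RM t -> PhiConn BO N0 t = Nb t))
  /\ (forall N0 N0' : (Om1 D -> M) -> M, homconn RM N0 -> homconn RM N0' ->
        (forall t, cotensor BA BO RM t -> PhiConn BO N0 t = PhiConn BO N0' t) ->
        forall f, HomA RM f -> N0 f = N0' f).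
Proof.
split; [exact: conn_PhiConn | split; last by move=> N0 N0' _ _; apply: PhiConn_inj].
move=> Nb Nb_conn; exists (homconn_of_conn BO Nb); split.
  exact: homconn_homconn_of_conn Nb_conn.
by move=> t _; apply: PhiConn_homconn_of_conn.
Qed.
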